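(* Let $G$ be a graph that has exactly three odd cycles. Then the intersection of every two of its odd cycles is either empty or a path.
   Context: All graphs are finite and simple. An odd cycle is a cycle (subgraph) of odd length. A path may consist of a single vertex. *)

From mathcomp Require Import all_boot.
Set Implicit Arguments. Unset Strict Implicit. Unset Printing Implicit Defensive.

(* A finite simple graph: vertex type T : finType, adjacency g : rel T,
   symmetric and irreflexive. A subgraph is a pair (vertex set, edge set),
   where an edge is represented by the 2-element vertex set {x, y}. *)
Definition subgraph (T : finType) := ({set T} * {set {set T}})%type.


Definition is_cycle_len (T : finType) (g : rel T) (C : subgraph T) (k : nat) : Prop :=
  exists s : seq T,
    [/\ uniq s, 3 <= size s, size s = k, cycle g s &
        C.1 = [set x in s]] /\
        C.2 = [set [set x; next s x] | x in s].

Definition is_odd_cycle (T : finType) (g : rel T) (C : subgraph T) : Prop :=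
  exists k, is_cycle_len g C k /\ odd k.

Definition is_path_sub (T : finType) (g : rel T) (C : subgraph T) : Prop :=
  exists (x : T) (p : seq T),
    [/\ uniq (x :: p), path g x p,
        C.1 = [set y in x :: p] &
        C.2 = [set [set q.1; q.2] | q in zip (x :: p) p]].

Definition sub_inter (T : finType) (C D : subgraph T) : subgraph T :=
  (C.1 :&: D.1, C.2 :&: D.2).

Definition sub_empty (T : finType) (C : subgraph T) : Prop := C.1 = set0 /\ C.2 = set0.

(* Let c be an odd cycle, d <> c another cycle, and call a vertex x of c an exit
   if the edge from x to its successor on d is not an edge of c.
   - Without exits, following d from a common vertex never leaves c, so every
     edge of d is an edge of c and d = c; hence c and d are disjoint.
   - With a single exit x, the walk along d from the first vertex of c after x
     back to x stays on c and is exactly the intersection.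
   - With two exits x and y, the segment of d from x to the next vertex of c is
     an ear of c; closing it with one of the two arcs of c it spans gives an odd
     cycle through the d-edge at x that avoids the d-edge at y.  With the
     symmetric cycle for y this makes four distinct odd cycles. *)

From mathcomp Require Import all_boot.
Set Implicit Arguments. Unset Strict Implicit. Unset Printing Implicit Defensive.

Section PathEdges.
Variable T : finType.
Implicit Types (x y z a b : T) (p s : seq T).

Definition path_edges x p : {set {set T}} := [set [set q.1; q.2] | q in zip (x :: p) p].

Lemma path_edges_nil x : path_edges x [::] = set0.
Proof. by apply/setP => e; rewrite inE; apply/imsetP => -[]. Qed.

Lemma path_edges_cons x a p : path_edges x (a :: p) = [set x; a] |: path_edges a p.
Proof.
apply/setP => e; rewrite !inE; apply/imsetP/orP => [[q]|].
  by rewrite inE => /orP[/eqP -> -> | qp ->]; [left | right; apply: imset_f].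
case=> [/eqP -> | /imsetP[q qp ->]]; first by exists (x, a); rewrite ?inE ?eqxx.
by exists q; rewrite // inE qp orbT.
Qed.

Lemma path_edges_cat x p s :
  path_edges x (p ++ s) = path_edges x p :|: path_edges (last x p) s.
Proof.
elim: p x => [|a p IH] x /=; first by rewrite path_edges_nil set0U.
by rewrite !path_edges_cons IH setUA.
Qed.

Lemma path_edges_rev x p z :
  path_edges z (rcons (rev p) x) = path_edges x (rcons p z).
Proof.
elim: p x => [|a p IH] x.
  by rewrite /= !path_edges_cons !path_edges_nil !setU0 setUC.
rewrite rev_cons -cats1 path_edges_cat IH last_rcons /=.
by rewrite !path_edges_cons path_edges_nil setU0 setUC [[set a; x]]setUC.
Qed.

Lemma eq_set2 a b x y :
  [set a; b] = [set x; y] -> (a = x /\ b = y) \/ (a = y /\ b = x).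
Proof.
move=> E; have ab := set21 a b; have bb := set22 a b.
have xy := set21 x y; have yy := set22 x y.
rewrite E in ab bb; rewrite -E in xy yy.
by case/set2P: ab => ?; case/set2P: bb => ?; case/set2P: xy => ?;
  case/set2P: yy => ?; subst; auto.
Qed.

Section FunctionalPath.
Variable f : T -> T.

Lemma path_edges_frel y s :
  fpath f y s -> path_edges y s = [set [set u; f u] | u in belast y s].
Proof.
elim: s y => [|a s IH] y /=.
  move=> _; rewrite path_edges_nil.
  by apply/setP => e; rewrite inE; apply/esym/imsetP => -[].
case/andP=> /eqP fy /IH {}IH; rewrite path_edges_cons IH.
apply/setP => e; rewrite inE.
apply/orP/imsetP => [[/set1P -> | /imsetP[u uin ->]] | [u]].
- by exists y; rewrite ?mem_head ?fy.
- by exists u; rewrite // inE uin orbT.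
rewrite inE => /orP[/eqP -> -> | uin ->]; first by left; rewrite fy.
by right; apply: imset_f.
Qed.

Lemma fpath_closed (Q : pred T) y s : fpath f y s -> Q y ->
  {in belast y s, forall u, Q u -> Q (f u)} -> all Q (y :: s).
Proof.
elim: s y => [|a s IH] y /=; first by move=> _ ->.
case/andP=> /eqP <- fs Qy QQ; rewrite Qy /=.
apply: IH => [//||u us]; first by apply: QQ; rewrite ?mem_head.
by apply: QQ; rewrite inE us orbT.
Qed.

End FunctionalPath.
End PathEdges.

Section CycleSubgraph.
Variable T : finType.
Implicit Types (x y z a b u v : T) (c d p q s : seq T).

Definition cycle_subgraph c : subgraph T :=
  ([set v in c], [set [set v; next c v] | v in c]).

Lemma is_odd_cycleP (g : rel T) C : is_odd_cycle g C <->
  exists c, [/\ uniq c, 3 <= size c, odd (size c), cycle g c & C = cycle_subgraph c].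
Proof.
split=> [[k [[c [[Uc c3 <- Cc E1] E2]] Ok]] | [c [Uc c3 Oc Cc ->]]].
  by exists c; split=> //; case: C E1 E2 => ? ? /= -> ->.
by exists (size c); split=> //; exists c.
Qed.

Lemma cycle_subgraph_rot i c : uniq c -> cycle_subgraph (rot i c) = cycle_subgraph c.
Proof.
move=> Uc; congr (_, _); first by apply/setP => v; rewrite !inE mem_rot.
apply/setP => e; apply/imsetP/imsetP => -[v vc ->]; exists v;
  rewrite ?(next_rot i Uc) //.
  by rewrite -(mem_rot i).
by rewrite mem_rot.
Qed.

Lemma cycle_edge_mem c a b :
  [set a; b] \in (cycle_subgraph c).2 -> (a \in c) && (b \in c).
Proof. by case/imsetP=> v vc /eq_set2[[-> ->] | [-> ->]]; rewrite mem_next vc. Qed.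

Lemma next_next_neq c u : uniq c -> 3 <= size c -> u \in c -> next c (next c u) != u.
Proof.
move=> Uc c3 uc; apply/eqP => nnu.
have ord : 2 < order (next c) u by rewrite (order_cycle (cycle_next Uc)).
by have := findex_iter ord; rewrite /= nnu findex0.
Qed.

Lemma next_neq_prev c u : uniq c -> 3 <= size c -> u \in c -> next c u != prev c u.
Proof.
move=> Uc c3 uc; apply: contra (next_next_neq Uc c3 uc) => /eqP ->.
by rewrite next_prev.
Qed.

Lemma cycle_edgeE c a b : uniq c ->
  ([set a; b] \in (cycle_subgraph c).2) = (a \in c) && (b \in [set next c a; prev c a]).
Proof.
move=> Uc; apply/imsetP/andP.
  case=> v vc /eq_set2[[-> ->] | [-> ->]]; first by rewrite vc set21.
  by rewrite mem_next vc prev_next // set22.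
case=> ac /set2P[->|->]; first by exists a.
exists (prev c a); first by rewrite mem_prev.
by rewrite next_prev // setUC.
Qed.

Lemma cycle_edge_inj c : uniq c -> 3 <= size c ->
  {in c &, injective (fun u => [set u; next c u])}.
Proof.
move=> Uc c3 u w uc wc /eq_set2[[] // | [uw wu]].
by have := next_next_neq Uc c3 wc; rewrite -uw wu eqxx.
Qed.

Lemma cycle_next_closed (Q : pred T) c x : uniq c -> x \in c -> Q x ->
  {in c, forall u, Q u -> Q (next c u)} -> {subset c <= Q}.
Proof.
move=> Uc xc Qx QQ; have [i r E] := rot_to xc.
have Fr : fpath (next c) x (rcons r x).
  by have := cycle_next Uc; rewrite -(rot_cycle i) E.
have inc u : u \in x :: r -> u \in c by rewrite -E mem_rot.
have /allP Qr : all Q (x :: rcons r x).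
  by apply: (fpath_closed Fr Qx) => u; rewrite belast_rcons => /inc; apply: QQ.
by move=> u; rewrite -(mem_rot i) E => ur; apply: Qr; rewrite inE mem_rcons ur orbT.
Qed.

Lemma cycle_arcs (e : rel T) x p z q :
  cycle e (x :: p ++ z :: q) = path e x (rcons p z) && path e z (rcons q x).
Proof. by rewrite /cycle -cat_rcons rcons_cat cat_path last_rcons. Qed.

Lemma rot_arcs x p z q : rot (size p).+1 (x :: p ++ z :: q) = z :: q ++ x :: p.
Proof. by rewrite /rot -cat_cons drop_size_cat // take_size_cat. Qed.

Lemma cycle_edges x s : uniq (x :: s) ->
  (cycle_subgraph (x :: s)).2 = path_edges x (rcons s x).
Proof. by move=> U; rewrite (path_edges_frel (cycle_next U)) belast_rcons. Qed.

Lemma cycle_arcs_edges x p z q : uniq (x :: p ++ z :: q) ->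
  (cycle_subgraph (x :: p ++ z :: q)).2 =
    path_edges x (rcons p z) :|: path_edges z (rcons q x).
Proof.
by move/cycle_edges ->; rewrite -cat_rcons rcons_cat path_edges_cat last_rcons.
Qed.

End CycleSubgraph.

Lemma cycle_edges_subset_eq (T : finType) (c d : seq T) :
  uniq c -> 3 <= size c -> uniq d -> 3 <= size d ->
  (cycle_subgraph d).2 \subset (cycle_subgraph c).2 ->
  cycle_subgraph c = cycle_subgraph d.
Proof.
move=> Uc c3 Ud d3 /subsetP dc.
have nbrs x : x \in d ->
    x \in c /\ [set next d x; prev d x] = [set next c x; prev c x].
  move=> xd; have xc : x \in c.
    by have /dc/cycle_edge_mem/andP[] : [set x; next d x] \in (cycle_subgraph d).2
      by apply: imset_f.
  split=> //; apply/eqP; rewrite eqEcard !cards2 !next_neq_prev // andbT.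
  apply/subsetP => b bx.
  have /dc : [set x; b] \in (cycle_subgraph d).2 by rewrite cycle_edgeE // xd.
  by rewrite cycle_edgeE // => /andP[].
have cd : {subset c <= d}.
  have /hasP[x0 x0d _] : has predT d by rewrite has_predT (leq_trans _ d3).
  apply: (cycle_next_closed (Q := fun v => v \in d) Uc (nbrs x0 x0d).1 x0d) => u _ ud.
  have /set2P[-> | ->] : next c u \in [set next d u; prev d u].
    by rewrite (nbrs u ud).2 set21.
  - by rewrite mem_next.
  - by rewrite mem_prev.
congr (_, _); first by apply/setP => v; rewrite !inE; apply/idP/idP => [/cd | /nbrs[]].
apply/eqP; rewrite eqEsubset; apply/andP; split; last exact/subsetP.
apply/subsetP => _ /imsetP[v vc ->].
by rewrite cycle_edgeE // cd //= (nbrs v (cd v vc)).2 set21.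
Qed.

Section Ear.
Variables (T : finType) (g : rel T).
Hypothesis gsym : symmetric g.
Implicit Types (x z : T) (c p q w : seq T).

Lemma uniq_splice (s q r : seq T) :
  uniq (s ++ q) -> uniq r -> {in r, forall v, v \notin s ++ q} -> uniq (s ++ r).
Proof.
rewrite !cat_uniq => /and3P[Us _ _] Ur Dr; rewrite Us Ur andbT /=.
by apply/hasPn => v /Dr; rewrite mem_cat negb_or => /andP[].
Qed.

Lemma odd_cycle_of_arcs x w z q : uniq (x :: w ++ z :: q) ->
  path g x (rcons w z) -> path g z (rcons q x) -> odd (size (x :: w ++ z :: q)) ->
  exists O, is_odd_cycle g O /\
    O.2 = path_edges x (rcons w z) :|: path_edges z (rcons q x).
Proof.
move=> U Pw Pq Os; exists (cycle_subgraph (x :: w ++ z :: q)).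
split; last exact: cycle_arcs_edges.
apply/is_odd_cycleP; exists (x :: w ++ z :: q).
split=> //; last by rewrite cycle_arcs Pw.
by move: Os; rewrite /= size_cat /= addnS; case: (size w + size q).
Qed.

Lemma odd_cycle_of_arcs_ear x w1 z w2 p :
  uniq (x :: w1 ++ z :: w2) -> odd (size (x :: w1 ++ z :: w2)) ->
  cycle g (x :: w1 ++ z :: w2) ->
  uniq p -> {in p, forall v, v \notin x :: w1 ++ z :: w2} -> path g x (rcons p z) ->
  exists O, [/\ is_odd_cycle g O,
    O.2 \subset (path_edges x (rcons w1 z) :|: path_edges z (rcons w2 x))
                   :|: path_edges x (rcons p z) &
    path_edges x (rcons p z) \subset O.2].
Proof.
move=> Uc Oc; rewrite cycle_arcs => /andP[P1 P2] Up pc Pp.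
have mem_c2 v : (v \in x :: w1 ++ z :: w2) = (v \in z :: w2 ++ x :: w1).
  by rewrite -(mem_rot (size w1).+1) rot_arcs.
have UA : uniq (x :: w1 ++ z :: rev p).
  rewrite -cat_rcons -cat_cons (uniq_splice (q := w2)) ?rev_uniq //.
    by rewrite cat_cons cat_rcons.
  by move=> v; rewrite mem_rev cat_cons cat_rcons; apply: pc.
have UB : uniq (z :: w2 ++ x :: p).
  rewrite -cat_rcons -cat_cons (uniq_splice (q := w1)) //.
    by rewrite cat_cons cat_rcons -rot_arcs rot_uniq.
  by move=> v; rewrite cat_cons cat_rcons -mem_c2; apply: pc.
have Prev : path g z (rcons (rev p) x).
  have := rev_path g x (rcons p z); rewrite last_rcons belast_rcons rev_cons => ->.
  by rewrite (eq_path (fun a b => gsym b a)).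
(* Closing the ear with either arc gives lengths summing to |c| + 2(|p| + 1). *)
have odd_sum : odd (size (x :: w1 ++ z :: rev p)) (+) odd (size (z :: w2 ++ x :: p)).
  have sizes : size (x :: w1 ++ z :: rev p) + size (z :: w2 ++ x :: p) =
      size (x :: w1 ++ z :: w2) + (size p).+1.*2.
    by rewrite /= !size_cat /= size_rev -addnn !(addnS, addSn) addnACA.
  by rewrite -oddD sizes oddD odd_double Oc.
case: (boolP (odd (size (x :: w1 ++ z :: rev p)))) => [oA | /negbTE nA].
  have [O [Oodd OE]] := odd_cycle_of_arcs UA P1 Prev oA.
  exists O; split=> //; rewrite OE path_edges_rev ?subsetUr //.
  by rewrite setSU // subsetUl.
rewrite nA /= in odd_sum.
have [O [Oodd OE]] := odd_cycle_of_arcs UB P2 Pp odd_sum.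
exists O; split=> //; rewrite OE ?subsetUr //.
by rewrite setSU // subsetUr.
Qed.

Lemma odd_cycle_of_ear c x z p :
  uniq c -> odd (size c) -> cycle g c -> x \in c -> z \in c -> x != z ->
  uniq p -> {in p, forall v, v \notin c} -> path g x (rcons p z) ->
  exists O, [/\ is_odd_cycle g O,
    O.2 \subset (cycle_subgraph c).2 :|: path_edges x (rcons p z) &
    path_edges x (rcons p z) \subset O.2].
Proof.
move=> Uc Oc Cc xc zc xz Up pc Pp.
have [i w E] := rot_to xc.
have zw : z \in w by move: zc; rewrite -(mem_rot i) E inE eq_sym (negbTE xz).
case/splitPr: zw E => w1 w2 E.
rewrite -(cycle_subgraph_rot i Uc) E cycle_arcs_edges -?E ?rot_uniq //.
apply: odd_cycle_of_arcs_ear Up _ Pp; rewrite -E ?size_rot ?rot_uniq ?rot_cycle //.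
by move=> v; rewrite mem_rot; apply: pc.
Qed.
End Ear.

Section Exits.
Variables (T : finType) (g : rel T).
Hypothesis gsym : symmetric g.
Variables c d : seq T.
Hypotheses (Uc : uniq c) (c3 : 3 <= size c) (Oc : odd (size c)) (Cc : cycle g c).
Hypotheses (Ud : uniq d) (d3 : 3 <= size d) (Cd : cycle g d).
Implicit Types (x y z u v w : T) (t r : seq T).

Definition is_exit v := (v \in c) && ([set v; next d v] \notin (cycle_subgraph c).2).

Lemma rot_to_split_find x y : x \in d -> y \in d -> y \in c -> y != x ->
  exists i t z r,
    [/\ rot i d = x :: t ++ z :: r, z \in c & {in t, forall v, v \notin c}].
Proof.
move=> xd yd yc yx; have [i r E] := rot_to xd.
have hr : has (fun v => v \in c) r.
  by apply/hasP; exists y => //; move: yd; rewrite -(mem_rot i d) E inE (negbTE yx).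
case: (split_find hr) E => z t r' zc tc E.
exists i, t, z, r'; split=> //; first by rewrite E cat_rcons.
by move=> v vt; apply: contra tc => vc; apply/hasP; exists v.
Qed.

Lemma rot_cycle_arcs i x t z r : rot i d = x :: t ++ z :: r ->
  [/\ path g x (rcons t z), path g z (rcons r x),
      fpath (next d) x (rcons t z) & fpath (next d) z (rcons r x)].
Proof.
move=> E; have /andP[Pt Pr] : path g x (rcons t z) && path g z (rcons r x).
  by rewrite -cycle_arcs -E rot_cycle.
have /andP[Ft Fr] : fpath (next d) x (rcons t z) && fpath (next d) z (rcons r x).
  by rewrite -cycle_arcs -E rot_cycle cycle_next.
by split.
Qed.

Lemma no_exit_disjoint : {in d, forall v, ~~ is_exit v} ->
  cycle_subgraph c <> cycle_subgraph d ->
  sub_empty (sub_inter (cycle_subgraph c) (cycle_subgraph d)).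
Proof.
move=> noex cd.
have edge_in_c u : u \in d -> u \in c -> [set u; next d u] \in (cycle_subgraph c).2.
  by move=> ud uc; have := noex u ud; rewrite /is_exit uc negbK.
case: (boolP (has (fun v => v \in c) d)) => [/hasP[v vd vc] | /hasPn dc].
  have dinc : {subset d <= c}.
    apply: (cycle_next_closed (Q := fun v => v \in c) Ud vd vc) => u ud uc.
    by have /andP[] := cycle_edge_mem (edge_in_c u ud uc).
  case: cd; apply: cycle_edges_subset_eq => //.
  by apply/subsetP => _ /imsetP[u ud ->]; apply: edge_in_c (dinc u ud).
split; apply/setP => v; rewrite !inE.
  by apply/negbTE/andP => -[vc vd]; have := dc v vd; rewrite vc.
apply/negbTE/andP => -[eC /imsetP[u ud Eu]].
rewrite Eu in eC; have /andP[uc _] := cycle_edge_mem eC.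
by have := dc u ud; rewrite uc.
Qed.

Lemma single_common_vertex x : x \in d -> is_exit x ->
  {in d, forall v, v \in c -> v = x} ->
  is_path_sub g (sub_inter (cycle_subgraph c) (cycle_subgraph d)).
Proof.
move=> xd /andP[xc xC] only_x; exists x, [::]; split=> //.
  apply/setP => v; rewrite !inE; apply/andP/idP => [[vc vd] | /eqP ->//].
  by rewrite (only_x v vd vc).
apply/setP => e; rewrite -/(path_edges x [::]) path_edges_nil !inE.
apply/andP => -[eC /imsetP[u ud Eu]]; rewrite Eu in eC.
have /andP[uc _] := cycle_edge_mem eC.
by move: xC; rewrite -(only_x u ud uc) eC.
Qed.

Lemma unique_exit_arc i x t z r : rot i d = x :: t ++ z :: r -> z \in c ->
  {in d, forall w, is_exit w -> w = x} ->
  {in z :: r, forall u, [set u; next d u] \in (cycle_subgraph c).2} /\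
  {subset z :: rcons r x <= c}.
Proof.
move=> E zc only_x; have [_ _ _ Fr] := rot_cycle_arcs E.
have xr : x \notin z :: r.
  by move: Ud; rewrite -(rot_uniq i) E cons_uniq mem_cat negb_or => /andP[/andP[]].
have arc_edges u :
    u \in z :: r -> u \in c -> [set u; next d u] \in (cycle_subgraph c).2.
  move=> ur uc; apply/negPn/negP => uC.
  have ud : u \in d by rewrite -(mem_rot i d) E inE mem_cat ur !orbT.
  by move: xr; rewrite -(only_x u ud) ?ur // /is_exit uc.
have arc_in_c : {subset z :: rcons r x <= c}.
  apply/allP; apply: (fpath_closed Fr zc) => u; rewrite belast_rcons => ur uc.
  by have /andP[] := cycle_edge_mem (arc_edges u ur uc).
split=> // u ur; apply: arc_edges => //; apply: arc_in_c.
by move: ur; rewrite !inE mem_rcons !inE => /orP[] ->; rewrite ?orbT.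
Qed.

Lemma unique_exit_path x y : x \in d -> is_exit x ->
  {in d, forall w, is_exit w -> w = x} -> y \in d -> y \in c -> y != x ->
  is_path_sub g (sub_inter (cycle_subgraph c) (cycle_subgraph d)).
Proof.
move=> xd /andP[xc xC] only_x yd yc yx.
have [i [t [z [r [E zc tc]]]]] := rot_to_split_find xd yd yc yx.
have [_ Pr Ft Fr] := rot_cycle_arcs E.
have [arc_edges arc_in_c] := unique_exit_arc E zc only_x.
have Us : uniq (x :: t ++ z :: r) by rewrite -E rot_uniq.
have Ed : (cycle_subgraph d).2 = path_edges x (rcons t z) :|: path_edges z (rcons r x).
  by rewrite -(cycle_subgraph_rot i Ud) E cycle_arcs_edges.
have vd v : (v \in d) = [|| v == x, v \in t | v \in z :: r].
  by rewrite -(mem_rot i d) E inE mem_cat.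
exists z, (rcons r x); split=> //.
- move: Us; rewrite -rcons_cons rcons_uniq cons_uniq mem_cat negb_or cat_uniq.
  by case/andP=> /andP[_ ->] /and3P[].
- apply/setP => v; rewrite !inE vd mem_rcons !inE; apply/andP/idP => [[vc] | vin].
    case/or3P=> [-> | vt | /orP[] ->]; rewrite ?orbT //.
    by rewrite (negbTE (tc v vt)) in vc.
  split; first by apply: arc_in_c; rewrite inE mem_rcons.
  by case/or3P: vin => ->; rewrite ?orbT.
apply/setP => e; rewrite -/(path_edges z (rcons r x)) in_setI Ed in_setU.
rewrite (path_edges_frel Ft) (path_edges_frel Fr) !belast_rcons.
apply/andP/idP => [[eC /orP[/imsetP[u ut Eu] | //]] | ein].
  move: ut eC; rewrite inE Eu => /orP[/eqP -> | /tc uc /cycle_edge_mem/andP[]].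
    by rewrite (negbTE xC).
  by rewrite (negbTE uc).
split; last by rewrite ein orbT.
by case/imsetP: ein => u ur ->; apply: arc_edges.
Qed.

Lemma unique_exit_meet x : x \in d -> is_exit x ->
  {in d, forall w, is_exit w -> w = x} ->
  is_path_sub g (sub_inter (cycle_subgraph c) (cycle_subgraph d)).
Proof.
move=> xd ex only_x.
have [/hasP[y yd /andP[yc yx]] | /hasPn only] :=
  boolP (has (fun v => (v \in c) && (v != x)) d).
  exact: (unique_exit_path xd ex only_x yd yc yx).
apply: (single_common_vertex xd ex) => v vd vc.
by apply/eqP; have := only v vd; rewrite vc negbK.
Qed.

Lemma exit_odd_cycle x y : x \in d -> x \in c -> y \in d -> y \in c -> y != x ->
  exists O, [/\ is_odd_cycle g O, [set x; next d x] \in O.2 &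
    {in d, forall w, is_exit w -> w != x -> [set w; next d w] \notin O.2}].
Proof.
move=> xd xc yd yc yx.
have [i [t [z [r [E zc tc]]]]] := rot_to_split_find xd yd yc yx.
have [Pt _ Ft _] := rot_cycle_arcs E.
have ear := path_edges_frel Ft; rewrite belast_rcons in ear.
have Us : uniq (x :: t ++ z :: r) by rewrite -E rot_uniq.
have xz : x != z by apply: contraTneq Us => <-; rewrite /= mem_cat inE eqxx orbT.
have Ut : uniq t by move: Us; rewrite cons_uniq cat_uniq => /andP[_ /and3P[]].
have [O [Oodd Osub earO]] := odd_cycle_of_ear gsym Uc Oc Cc xc zc xz Ut tc Pt.
exists O; split=> //.
  by apply: (subsetP earO); rewrite ear; apply/imsetP; exists x; rewrite ?mem_head.
move=> w wd /andP[wc wC] wx; apply: contra wC => wO.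
move: (subsetP Osub _ wO); rewrite in_setU ear => /orP[// | /imsetP[u ut Eu]].
have ud : u \in d by rewrite -(mem_rot i d) E -cat_cons mem_cat ut.
move: ut; rewrite -(cycle_edge_inj Ud d3 wd ud Eu) inE (negbTE wx) => /tc.
by rewrite wc.
Qed.

Lemma two_exits_odd_cycles x y : cycle_subgraph c <> cycle_subgraph d ->
  x \in d -> is_exit x -> y \in d -> is_exit y -> y != x ->
  exists O1 O2, [/\ is_odd_cycle g O1, is_odd_cycle g O2 &
    uniq [:: cycle_subgraph c; cycle_subgraph d; O1; O2]].
Proof.
move=> cd xd ex yd ey yx; have /andP[xc xC] := ex; have /andP[yc yC] := ey.
have xy : x != y by rewrite eq_sym.
have [Ox [Ox_odd Ox_x Ox_out]] := exit_odd_cycle xd xc yd yc yx.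
have [Oy [Oy_odd Oy_y Oy_out]] := exit_odd_cycle yd yc xd xc xy.
have in_d w : w \in d -> [set w; next d w] \in (cycle_subgraph d).2.
  by move=> wd; apply/imsetP; exists w.
have cOx : cycle_subgraph c != Ox by apply: contraNneq xC => ->.
have cOy : cycle_subgraph c != Oy by apply: contraNneq yC => ->.
have dOx : cycle_subgraph d != Ox.
  by apply: contraNneq (Ox_out y yd ey yx) => <-; apply: in_d.
have dOy : cycle_subgraph d != Oy.
  by apply: contraNneq (Oy_out x xd ex xy) => <-; apply: in_d.
have OxOy : Ox != Oy by apply: contraNneq (Oy_out x xd ex xy) => <-.
exists Ox, Oy; split=> //.
by rewrite /= !inE !negb_or cOx cOy dOx dOy OxOy !andbT; apply/eqP.
Qed.

Lemma odd_cycle_meet : cycle_subgraph c <> cycle_subgraph d ->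
  [\/ sub_empty (sub_inter (cycle_subgraph c) (cycle_subgraph d)),
      is_path_sub g (sub_inter (cycle_subgraph c) (cycle_subgraph d)) |
      exists O1 O2, [/\ is_odd_cycle g O1, is_odd_cycle g O2 &
        uniq [:: cycle_subgraph c; cycle_subgraph d; O1; O2]]].
Proof.
move=> cd.
have [/hasP[x xd ex] | /hasPn noex] := boolP (has is_exit d); last first.
  by constructor 1; apply: no_exit_disjoint.
have [/hasP[y yd /andP[ey yx]] | /hasPn only_x] :=
  boolP (has (fun w => is_exit w && (w != x)) d).
  by constructor 3; apply: (two_exits_odd_cycles cd xd ex yd ey yx).
constructor 2; apply: (unique_exit_meet xd ex) => w wd ew.
by apply/eqP; have := only_x w wd; rewrite ew negbK.
Qed.

End Exits.

Unset Implicit Arguments.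
Set Strict Implicit.
Theorem lemma2p3 (T : finType) (g : rel T)
    (gsym : symmetric g) (girr : irreflexive g)
    (three : exists C1 C2 C3 : subgraph T,
        [/\ is_odd_cycle g C1, is_odd_cycle g C2, is_odd_cycle g C3,
            [/\ C1 <> C2, C1 <> C3 & C2 <> C3] &
            forall C, is_odd_cycle g C -> [\/ C = C1, C = C2 | C = C3]]) :
  forall C D : subgraph T, is_odd_cycle g C -> is_odd_cycle g D -> C <> D ->
    sub_empty (sub_inter C D) \/ is_path_sub g (sub_inter C D).
Proof.
move=> C D oddC oddD CD.
have [C1 [C2 [C3 [_ _ _ _ only3]]]] := three.
have in3 O : is_odd_cycle g O -> O \in [:: C1; C2; C3].
  by case/only3 => ->; rewrite !inE eqxx ?orbT.
case/is_odd_cycleP: (oddC) => c [Uc c3 Oc Cc EC].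
case/is_odd_cycleP: (oddD) => d [Ud d3 _ Cd ED].
subst C D.
case: (odd_cycle_meet gsym Uc c3 Oc Cc Ud d3 Cd CD) => [||[O1 [O2 [odd1 odd2 U]]]].
- by left.
- by right.
suff: 4 <= size [:: C1; C2; C3] by [].
apply: uniq_leq_size U _ => O O4; apply: in3.
by move: O4; rewrite !inE => /or4P[] /eqP ->.
Qed.
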